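(* Every $\mathcal{TPTG}$-regular Lawson paratopological group is a topological group, where $\mathcal{TPTG}$ denotes the class of topologically periodic topological groups.
   Context: All topological spaces are Hausdorff. A paratopological group is a group with a Hausdorff topology making multiplication continuous; a topological group additionally has continuous inversion. A paratopological group is Lawson if it has a neighborhood base at the unit consisting of subsemigroups. A paratopological group $G$ is topologically periodic if for every $x\in G$ and every neighborhood $U$ of the unit there is $n\ge1$ with $x^n\in U$. A continuous map $h:X\to Y$ is regular if for each $x\in X$ and neighborhood $U$ of $x$ there is a closed $F\subset Y$ such that $h^{-1}(F)$ is a closed neighborhood of $x$ contained in $U$. For a class $\mathcal G$ of topological groups, a paratopological group is $\mathcal G$-regular if it admits a regular continuous homomorphism onto a topological group belonging to $\mathcal G$. *)

From HB Require Import structures.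
From mathcomp Require Import all_boot all_order.
From mathcomp Require Import all_classical topology.
Set Implicit Arguments. Unset Strict Implicit. Unset Printing Implicit Defensive.
Local Open Scope classical_set_scope.

Definition group_axioms (T : Type) (mul : T -> T -> T) (inv : T -> T) (e : T) :=
  [/\ forall x y z, mul x (mul y z) = mul (mul x y) z,
      forall x, mul e x = x, forall x, mul x e = x,
      forall x, mul (inv x) x = e & forall x, mul x (inv x) = e].

Definition paratopological_group (T : topologicalType)
  (mul : T -> T -> T) (inv : T -> T) (e : T) : Prop :=
  [/\ group_axioms mul inv e, hausdorff_space T &
      continuous (fun p : T * T => mul p.1 p.2)].

Definition topological_group (T : topologicalType)
  (mul : T -> T -> T) (inv : T -> T) (e : T) : Prop :=
  paratopological_group mul inv e /\ continuous inv.

Definition lawson (T : topologicalType) (mul : T -> T -> T) (e : T) : Prop :=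
  forall U, nbhs e U -> exists V : set T,
    [/\ nbhs e V, V `<=` U & forall a b, V a -> V b -> V (mul a b)].

Definition gpow (T : Type) (mul : T -> T -> T) (e : T) (x : T) (n : nat) : T :=
  iter n (mul x) e.

Definition topologically_periodic (T : topologicalType)
  (mul : T -> T -> T) (e : T) : Prop :=
  forall (x : T) (U : set T), nbhs e U -> exists n : nat, (1 <= n)%N /\ U (gpow mul e x n).

Definition regular_map (X Y : topologicalType) (h : X -> Y) : Prop :=
  continuous h /\
  forall (x : X) (U : set X), nbhs x U -> exists F : set Y,
    [/\ closed F, closed (h @^-1` F), nbhs x (h @^-1` F) & h @^-1` F `<=` U].

Definition TPTG_regular (G : topologicalType)
  (mul : G -> G -> G) (inv : G -> G) (e : G) : Prop :=
  exists (H : topologicalType) (mulH : H -> H -> H) (invH : H -> H) (eH : H)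
         (h : G -> H),
    [/\ topological_group mulH invH eH,
        topologically_periodic mulH eH,
        forall x y, h (mul x y) = mulH (h x) (h y),
        (forall y : H, exists x : G, h x = y) & regular_map h].

(* Let h : G -> H be the regular homomorphism and U a neighbourhood of e.
   Regularity gives a closed F with h^-1(F) a neighbourhood of e inside U, and
   Lawson gives a subsemigroup neighbourhood V of e inside h^-1(F).  For x in V
   all powers of h x lie in h(V), hence in F.  In the topologically periodic
   group H, the inverse of y is a limit of powers of y (y^n close to e means
   y^(n-1) close to y^-1), so h(x^-1) = (h x)^-1 lies in the closed set F, i.e.
   x^-1 lies in U.  Thus inversion is continuous at e, and translations
   spread this to all of G. *)
From mathcomp Require Import all_boot all_order.
From mathcomp Require Import all_classical topology.
Local Open Scope classical_set_scope.

Lemma continuous_mull {G : topologicalType} {mul : G -> G -> G} :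
  continuous (fun p : G * G => mul p.1 p.2) -> forall a, continuous (mul a).
Proof.
move=> mul_cont a z.
apply: (@continuous_comp _ _ _ (fun z => (a, z)) (fun p : G * G => mul p.1 p.2)).
- by apply: cvg_pair => //; exact: cvg_cst.
- exact: mul_cont.
Qed.

Lemma continuous_mulr {G : topologicalType} {mul : G -> G -> G} :
  continuous (fun p : G * G => mul p.1 p.2) -> forall a, continuous (mul^~ a).
Proof.
move=> mul_cont a z.
apply: (@continuous_comp _ _ _ (fun z => (z, a)) (fun p : G * G => mul p.1 p.2)).
- by apply: cvg_pair => //; exact: cvg_cst.
- exact: mul_cont.
Qed.

Lemma gpow_closed (T : Type) (mul : T -> T -> T) (e : T) (V : set T) x n :
  V e -> (forall a b, V a -> V b -> V (mul a b)) -> V x -> V (gpow mul e x n).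
Proof. by move=> Ve mulV Vx; elim: n => //= n IH; exact: mulV. Qed.

Section GroupTheory.
Variables (T : Type) (mul : T -> T -> T) (inv : T -> T) (e : T).
Hypothesis grp : group_axioms mul inv e.

Lemma inv_uniq a b : mul a b = e -> inv a = b.
Proof.
case: grp => mulA mul1g mulg1 mulVg _ ab1.
by rewrite -[inv a]mulg1 -ab1 mulA mulVg mul1g.
Qed.

Lemma invM a b : inv (mul a b) = mul (inv b) (inv a).
Proof.
case: grp => mulA mul1g _ _ mulgV.
by apply: inv_uniq; rewrite -mulA (mulA b) mulgV mul1g mulgV.
Qed.

Lemma invK a : inv (inv a) = a.
Proof. by case: grp => _ _ _ mulVg _; apply: inv_uniq; exact: mulVg. Qed.

Lemma gpowSr x n : gpow mul e x n.+1 = mul (gpow mul e x n) x.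
Proof.
case: grp => mulA mul1g mulg1 _ _.
elim: n => [|n IH]; first by rewrite /gpow /= mul1g mulg1.
by rewrite /gpow /= -mulA; congr (mul x); exact: IH.
Qed.

End GroupTheory.

Arguments inv_uniq {T mul inv e}.
Arguments invM {T mul inv e}.
Arguments invK {T mul inv e}.
Arguments gpowSr {T mul inv e}.

Section Homomorphism.
Variables (G H : Type) (mul : G -> G -> G) (inv : G -> G) (e : G).
Variables (mulH : H -> H -> H) (invH : H -> H) (eH : H) (h : G -> H).
Hypotheses (grpG : group_axioms mul inv e) (grpH : group_axioms mulH invH eH).
Hypothesis hM : forall x y, h (mul x y) = mulH (h x) (h y).

Lemma hom_unit : h e = eH.
Proof.
case: grpG grpH => _ mul1g _ _ _ [mulA mul1gH _ mulVgH _].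
have idem : mulH (h e) (h e) = h e by rewrite -hM mul1g.
by rewrite -[h e]mul1gH -(mulVgH (h e)) -mulA idem.
Qed.

Lemma hom_inv x : h (inv x) = invH (h x).
Proof.
case: grpG => _ _ _ _ mulgV.
by apply/esym; apply: (inv_uniq grpH); rewrite -hM mulgV hom_unit.
Qed.

Lemma hom_gpow x n : h (gpow mul e x n) = gpow mulH eH (h x) n.
Proof. by elim: n => [|n IH]; [exact: hom_unit | rewrite /gpow /= hM; congr (mulH _)]. Qed.

End Homomorphism.

Arguments hom_inv {G H mul inv e mulH invH eH h}.
Arguments hom_gpow {G H mul inv e mulH invH eH h}.

Lemma periodic_inv_in_closure_powers {H : topologicalType}
    {mul : H -> H -> H} {inv : H -> H} {e : H} :
  group_axioms mul inv e -> (forall a, continuous (mul^~ a)) ->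
  topologically_periodic mul e ->
  forall y, closure (range (gpow mul e y)) (inv y).
Proof.
move=> grp mulr_cont per y N Ninvy.
have [mulA mul1g mulg1 _ mulgV] := grp.
pose S := mul^~ (inv y) @^-1` N.
have nS : nbhs e S by apply: mulr_cont; rewrite mul1g.
have [[|n] [n_gt0 Syn]] := per y S nS; first by [].
exists (gpow mul e y n); split; first by exists n.
by move: Syn; rewrite (gpowSr grp) /S /preimage /mkset -mulA mulgV mulg1.
Qed.

Lemma continuous_inv_of_cvg_unit {G : topologicalType}
    {mul : G -> G -> G} {inv : G -> G} {e : G} :
  paratopological_group mul inv e ->
  (forall U, nbhs e U -> nbhs e (inv @^-1` U)) -> continuous inv.
Proof.
move=> [grp _ mul_cont] inv_e x U hU.
have [mulA mul1g mulg1 mulVg mulgV] := grp.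
pose U1 := mul (inv x) @^-1` U.
have nU1 : nbhs e U1 by apply: (continuous_mull mul_cont (inv x)); rewrite mulg1.
have : nbhs x (mul^~ (inv x) @^-1` (inv @^-1` U1)).
  by apply: (continuous_mulr mul_cont (inv x)); rewrite mulgV; exact: inv_e.
(* inv y = inv x * inv (y * inv x) *)
by apply: filterS => y; rewrite /U1 /= (invM grp) (invK grp) mulA mulVg mul1g.
Qed.

Lemma lawson_regular_cvg_inv_unit {G H : topologicalType}
    {mul : G -> G -> G} {inv : G -> G} {e : G}
    {mulH : H -> H -> H} {invH : H -> H} {eH : H} {h : G -> H} :
  group_axioms mul inv e -> lawson mul e ->
  topological_group mulH invH eH -> topologically_periodic mulH eH ->
  (forall x y, h (mul x y) = mulH (h x) (h y)) -> regular_map h ->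
  forall U, nbhs e U -> nbhs e (inv @^-1` U).
Proof.
move=> grp law [[grpH _ mulH_cont] _] per hM [_ reg] U hU.
have [F [closedF _ nF FU]] := reg e U hU.
have [V [nV VF mulV]] := law _ nF.
have Ve : V e := nbhs_singleton nV.
apply: filterS nV => x Vx; apply: FU; rewrite /= (hom_inv grp grpH hM).
have powers_in_F : range (gpow mulH eH (h x)) `<=` F.
  move=> _ [n _ <-]; rewrite -(hom_gpow grp grpH hM); apply: VF.
  exact: gpow_closed.
apply/closedF/(closureS powers_in_F).
exact: periodic_inv_in_closure_powers grpH (continuous_mulr mulH_cont) per (h x).
Qed.

Theorem proposition4 (G : topologicalType) (mul : G -> G -> G) (inv : G -> G) (e : G) :
  paratopological_group mul inv e -> lawson mul e -> TPTG_regular mul inv e ->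
  topological_group mul inv e.
Proof.
move=> para law [H [mulH [invH [eH [h [topH perH hM _ reg]]]]]].
split => //; apply: (continuous_inv_of_cvg_unit para).
case: para => grp _ _.
exact: lawson_regular_cvg_inv_unit grp law topH perH hM reg.
Qed.
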